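(* Let $V$ be a vertex operator algebra and $n\in\mathbb{N}$, let $u\in V$ be homogeneous and $v\in V$, and set $Y^+(u,x)v=\sum_{k\ge1}u_{-k}v\,x^{k-1}$. If $\mathrm{wt}\,u>-n$, then, coefficientwise in $x$, \[ Y^+(u,x)v\ \sim_n\ \sum_{k=1}^{n-\mathrm{wt}\,u+1}u_{-k}v\,x^{k-1}+\sum_{m\ge n+1}\ \sum_{k=n-\mathrm{wt}\,u+2}^{2n+1}(-1)^{m-\mathrm{wt}\,u}\binom{m-n-1}{k-n+\mathrm{wt}\,u-2}\binom{m-k-\mathrm{wt}\,u}{2n-k+1}u_{-k}v\,x^{-\mathrm{wt}\,u+m}, \] and if $\mathrm{wt}\,u=-n$, then $Y^+(u,x)v\sim_n\sum_{k=1}^{2n+1}u_{-k}v\,x^{k-1}$.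
   Context: $Y(u,x)=\sum_{k\in\mathbb{Z}}u_kx^{-k-1}$, $\mathrm{wt}\,u$ is the $L(0)$-eigenvalue. For homogeneous $a$ and $b\in V$, $a\circ_n b=\mathrm{Res}_x\,(1+x)^{\mathrm{wt}\,a+n}Y(a,x)b\,x^{-2n-2}$ (extended linearly), $O_n^\circ(V)=\mathrm{span}\{a\circ_n b\}$, and $a\sim_n b$ means $a-b\in O_n^\circ(V)$; for formal power series it means each coefficient difference lies in $O_n^\circ(V)$. Binomial coefficients $\binom{p}{q}=p(p-1)\cdots(p-q+1)/q!$ for $p\in\mathbb{Z}$, $q\in\mathbb{N}$, and $0$ for $q<0$. *)

From HB Require Import structures.
From mathcomp Require Import all_boot all_order all_algebra.
Set Implicit Arguments. Unset Strict Implicit. Unset Printing Implicit Defensive.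
Import Order.TTheory GRing.Theory Num.Theory.
Local Open Scope ring_scope.

Section VOA.
Variables (K : fieldType) (V : lmodType K).

Definition binom (p q : int) : K :=
  match q with
  | Posz m => (\prod_(i < m) (p - (i : nat)%:Z)%:~R) / (m`!)%:R
  | Negz _ => 0
  end.

(* Y u k v = u_k v, i.e. Y(u,x) v = \sum_k u_k v x^{-k-1}. *)
Variable Y : V -> int -> V -> V.
Variables (vac om : V) (c : K).

Definition Lop (n : int) (v : V) : V := Y om (n + 1) v.

(* Vertex operator algebra axioms (FLM / Lepowsky-Li), in mode form;
   the Jacobi identity is stated as the equivalent Borcherds identity,
   whose (a priori infinite) sums are written as finite sums over a
   range beyond which all terms vanish by truncation. *)
Record isVOA : Prop := {
  Y_linl : forall (k : int) (a b w : V) (x : K),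
      Y (x *: a + b) k w = x *: Y a k w + Y b k w;
  Y_linr : forall (k : int) (u a b : V) (x : K),
      Y u k (x *: a + b) = x *: Y u k a + Y u k b;
  Y_trunc : forall u w : V, exists N : int, forall k : int, N <= k -> Y u k w = 0;
  Y_vac : forall (w : V) (k : int), Y vac k w = if k == -1 then w else 0;
  Y_creation_pos : forall (w : V) (k : int), 0 <= k -> Y w k vac = 0;
  Y_creation : forall w : V, Y w (-1) vac = w;
  Y_borcherds : forall (a b w : V) (p q r : int) (N : nat),
      (forall i : nat, (N <= i)%N ->
         [/\ Y a (r + i%:Z) b = 0, Y b (q + i%:Z) w = 0 & Y a (p + i%:Z) w = 0]) ->
      \sum_(i < N) binom p i *: Y (Y a (r + (i : nat)%:Z) b) (p + q - (i : nat)%:Z) w =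
      \sum_(i < N) ((-1) ^+ i * binom r i) *:
         (Y a (p + r - (i : nat)%:Z) (Y b (q + (i : nat)%:Z) w)
          - (-1) ^ r *: Y b (q + r - (i : nat)%:Z) (Y a (p + (i : nat)%:Z) w));
  virasoro : forall (m k : int) (w : V),
      Lop m (Lop k w) - Lop k (Lop m w) =
      (m - k)%:~R *: Lop (m + k) w
      + (if m + k == 0 then ((m ^+ 3 - m)%:~R / 12%:R * c) *: w else 0);
  L0_om : Lop 0 om = 2%:R *: om;
  L_minus1_deriv : forall (a w : V) (k : int),
      Y (Lop (-1) a) k w = - (k%:~R) *: Y a (k - 1) w;
  grading : forall w : V, exists s : seq (int * V),
      (forall t, t \in s -> Lop 0 t.2 = t.1%:~R *: t.2) /\
      w = \sum_(t <- s) t.2;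
  fin_dim : forall n : int, exists s : seq V, forall w : V,
      Lop 0 w = n%:~R *: w -> exists cs : seq K, w = \sum_(i < size s) cs`_i *: s`_i;
  lower_bounded : exists N : int, forall (n : int) (w : V),
      n < N -> Lop 0 w = n%:~R *: w -> w = 0
}.

(* y = a o_n b = Res_x (1+x)^{wt a + n} Y(a,x) b x^{-2n-2}
            = \sum_{j >= 0} binom(wt a + n, j) a_{j-2n-2} b  (a finite sum). *)
Definition circ_val (n : nat) (a : V) (wa : int) (b y : V) : Prop :=
  exists N0 : nat, forall N : nat, (N0 <= N)%N ->
    y = \sum_(j < N) binom (wa + n%:Z) (j : nat)%:Z *:
          Y a ((j : nat)%:Z - 2 * n%:Z - 2) b.

Definition is_circ (n : nat) (y : V) : Prop :=
  exists (a : V) (wa : int) (b : V), Lop 0 a = wa%:~R *: a /\ circ_val n a wa b y.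

Definition inO (n : nat) (x : V) : Prop :=
  exists s : seq (K * V), (forall t, t \in s -> is_circ n t.2) /\
    x = \sum_(t <- s) t.1 *: t.2.

Definition simO (n : nat) (a b : V) : Prop := inO n (a - b).

Definition sumz (a b : int) (F : int -> V) : V :=
  if a <= b then \sum_(i < absz (b - a + 1)) F (a + (i : nat)%:Z) else 0.

(* Coefficient of x^p (p >= 0) of the right-hand side in the case wt u = w > -n:
     sum_{k=1}^{n-w+1} u_{-k} v x^{k-1}
   + sum_{m >= n+1} sum_{k=n-w+2}^{2n+1} (-1)^{m-w} C(m-n-1, k-n+w-2)
                      C(m-k-w, 2n-k+1) u_{-k} v x^{-w+m}. *)
Definition rhs_coeff (n : nat) (u : V) (w : int) (v : V) (p : nat) : V :=
  let m := p%:Z + w in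
  (if (1 <= p%:Z + 1) && (p%:Z + 1 <= n%:Z - w + 1) then Y u (- (p%:Z + 1)) v else 0)
  + (if n%:Z + 1 <= m then
       sumz (n%:Z - w + 2) (2 * n%:Z + 1) (fun k =>
         ((-1) ^ (m - w) * binom (m - n%:Z - 1) (k - n%:Z + w - 2)
            * binom (m - k - w) (2 * n%:Z - k + 1)) *: Y u (- k) v)
     else 0).

End VOA.

From HB Require Import structures.
From mathcomp Require Import all_boot all_order all_algebra.
From mathcomp Require Import ring zify.
Import Order.TTheory GRing.Theory Num.Theory.
Set Implicit Arguments.
Unset Strict Implicit.
Unset Printing Implicit Defensive.
Local Open Scope ring_scope.

(* Since
   (L(-1)a)_k = -k a_{k-1} and L(-1) raises weights by one, induction on m,
   applied to L(-1)a and a, shows that sum_j C(wt a + n, j) a_{j-2n-2-m} v lies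
   in O_n(V) for every homogeneous a and every m >= 0.  Hence, with
   N = wt u + n, the sequence e_t = u_{-(n - wt u + 2 + t)} v satisfies modulo
   O_n(V) the linear recurrence with characteristic polynomial (1 + x)^N, so it
   is determined by e_0, ..., e_{N-1}:
     e_t ~ sum_{j<N} (-1)^(N-1+t) C(t, j) C(t-j-1, N-1-j) e_j.
   These coefficients have the right initial values and, for fixed j, are
   (-1)^t times a polynomial of degree < N in t, which the N-th finite
   difference kills. *)

Section BinomialPolynomial.
Variable K : fieldType.

Definition binom_poly (q : nat) : {poly K} :=
  (q`!%:R)^-1 *: \prod_(i < q) ('X - (i%:R)%:P).

Lemma binom_horner (z : int) (q : nat) : binom K z q = (binom_poly q).[z%:~R].
Proof.
rewrite /binom /binom_poly hornerZ horner_prod mulrC; congr (_ * _).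
by apply: eq_bigr => i _; rewrite hornerXsubC intrB.
Qed.

Lemma size_binom_poly (q : nat) : (size (binom_poly q) <= q.+1)%N.
Proof.
apply: leq_trans (size_scale_leq _ _) _.
elim: q => [|q IH]; first by rewrite big_ord0 size_poly1.
rewrite big_ord_recr /=; apply: leq_trans (size_polyMleq _ _) _.
by rewrite size_XsubC addn2.
Qed.

Lemma size_backward_difference (N : nat) (P : {poly K}) :
  (size P <= N.+1)%N -> (size (P - (P \Po ('X - 1%:P)))%R <= N)%N.
Proof.
move=> sizeP; have size_comp : size (P \Po ('X - 1%:P)) = size P.
  by rewrite size_comp_poly2 // size_XsubC.
apply/leq_sizeP => j leNj; rewrite coefB.
case: (ltnP j (size P)) => [ltjP | lePj]; last first.
  by rewrite !nth_default ?subrr ?size_comp.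
have -> : j = (size P).-1 by lia.
rewrite -{2}size_comp -!lead_coefE lead_coef_comp ?size_XsubC //.
by rewrite lead_coefXsubC expr1n mulr1 subrr.
Qed.

Lemma finite_difference_poly (N : nat) (P : {poly K}) (x : K) :
  (size P <= N)%N ->
  \sum_(i < N.+1) (-1) ^+ i * 'C(N, i)%:R * P.[x - i%:R] = 0.
Proof.
elim: N P x => [|N IH] P x sizeP.
  move: sizeP; rewrite leqn0 size_poly_eq0 => /eqP ->.
  by rewrite big1 // => i _; rewrite horner0 mulr0.
have := IH _ x (size_backward_difference sizeP).
under eq_bigr do rewrite hornerD hornerN horner_comp hornerXsubC mulrBr.
rewrite sumrB => IHP; rewrite -[RHS]IHP big_ord_recl /= expr0 bin0 !mul1r subr0.
under eq_bigr do rewrite binS natrD mulrDr mulrDl.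
rewrite big_split /= addrA; congr (_ + _).
  transitivity (\sum_(i < N.+2) (-1) ^+ i * 'C(N, i)%:R * P.[x - i%:R]).
    by rewrite [RHS]big_ord_recl /= expr0 bin0 !mul1r subr0.
  by rewrite big_ord_recr /= bin_small // mulr0 mul0r addr0.
rewrite -sumrN; apply: eq_bigr => i _.
by rewrite /bump /= add1n exprS -natr1 opprD addrA mulN1r !mulNr.
Qed.
End BinomialPolynomial.

Section RecurrenceSolution.
Variable K : fieldType.
Hypothesis charK : [pchar K] =i pred0.

Lemma char0_natf_neq0 (m : nat) : (0 < m)%N -> m%:R != 0 :> K.
Proof. by move=> m_gt0; rewrite (pcharf0P _).1 // -lt0n. Qed.

Lemma binom_nat (M j : nat) : binom K M j = 'C(M, j)%:R.
Proof.
have ffactE : \prod_(i < j) ((M%:Z - i%:Z)%:~R : K) = (M ^_ j)%:R.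
  elim: j => [|j IH]; first by rewrite big_ord0 ffactn0.
  rewrite big_ord_recr /= IH ffactnSr natrM.
  case: (leqP j M) => [leM | ltM]; last by rewrite ffact_small // !mul0r.
  by rewrite subzn // pmulrn.
by rewrite /binom ffactE -bin_ffact natrM mulfK // char0_natf_neq0 // fact_gt0.
Qed.

Lemma binomN1 (q : nat) : binom K (-1) q = (-1) ^+ q.
Proof.
have prodE : \prod_(i < q) ((-1 - i%:Z)%:~R : K) = (-1) ^+ q * q`!%:R.
  elim: q => [|q IH]; first by rewrite big_ord0 expr0 mul1r.
  rewrite big_ord_recr /= IH factS natrM exprS intrB -natr1 pmulrn; ring.
by rewrite /binom prodE mulfK // char0_natf_neq0 // fact_gt0.
Qed.

(* With t = m - n - 1 and k = n - wt u + 2 + j, this is the coefficient of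
   u_{-k} v at x^(m - wt u) in the statement. *)
Definition rec_coef (N t j : nat) : K :=
  (-1) ^+ (N.-1 + t) * binom K t j * binom K (t%:Z - j%:Z - 1) (N.-1 - j)%N.

Lemma rec_coef_init (N t j : nat) :
  (t < N)%N -> (j < N)%N -> rec_coef N t j = (t == j)%:R.
Proof.
move=> ltN ljN; rewrite /rec_coef; case: (ltngtP t j) => [lt_tj | lt_jt | <-].
- by rewrite binom_nat bin_small // mulr0 mul0r.
- rewrite (_ : t%:Z - j%:Z - 1 = (t - j - 1)%N); last by lia.
  by rewrite [X in _ * X = _]binom_nat bin_small ?mulr0 //; lia.
rewrite binom_nat binn mulr1 (_ : t%:Z - t%:Z - 1 = -1) ?binomN1; last by lia.
rewrite -exprD (_ : (N.-1 + t + (N.-1 - t) = N.-1 * 2)%N); last by lia.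
by rewrite exprM sqrr_sign.
Qed.

Lemma rec_coef_rec (N t j : nat) : (N <= t)%N -> (j < N)%N ->
  \sum_(i < N.+1) 'C(N, i)%:R * rec_coef N (t - i) j = 0.
Proof.
move=> leNt ltjN.
pose P := binom_poly K j * (binom_poly K (N.-1 - j) \Po ('X - (j.+1)%:R%:P)).
have sizeP : (size P <= N)%N.
  apply: leq_trans (size_polyMleq _ _) _; rewrite size_comp_poly2 ?size_XsubC //.
  move: (size_binom_poly K j) (size_binom_poly K (N.-1 - j)).
  set a := size (binom_poly K j); set b := size (binom_poly K _); lia.
have rec_coefE s : rec_coef N s j = (-1) ^+ (N.-1 + s) * P.[s%:R].
  rewrite /rec_coef -mulrA hornerM horner_comp hornerXsubC !binom_horner.
  by rewrite !intrB -!pmulrn -natr1 opprD addrA.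
rewrite -[RHS](mulr0 ((-1) ^+ (N.-1 + t))).
rewrite -[X in _ * X](finite_difference_poly t%:R sizeP).
rewrite mulr_sumr; apply: eq_bigr => i _.
have le_it : (i <= t)%N by have := ltn_ord i; lia.
rewrite rec_coefE natrB // addnBA // exprB ?unitrN1 //; last first.
  exact: leq_trans le_it (leq_addl _ _).
by rewrite invr_sign; ring.
Qed.

End RecurrenceSolution.

Section RecurrenceModulo.
Variables (K : fieldType) (V : lmodType K) (S : V -> Prop).
Hypotheses (S0 : S 0) (SD : forall x y, S x -> S y -> S (x + y))
  (SZ : forall (k : K) x, S x -> S (k *: x)).

Lemma linear_recurrence_mod (N : nat) (a : nat -> K) (d : nat -> nat -> K)
    (e : nat -> V) :
  a 0%N = 1 ->
  (forall t j, (t < N)%N -> (j < N)%N -> d t j = (t == j)%:R) ->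
  (forall t j, (N <= t)%N -> (j < N)%N ->
     \sum_(i < N.+1) a i * d (t - i)%N j = 0) ->
  (forall t, (N <= t)%N -> S (\sum_(i < N.+1) a i *: e (t - i)%N)) ->
  forall t, S (e t - \sum_(j < N) d t j *: e j).
Proof.
move=> a0 d_init d_rec e_rec t.
have SB x y : S x -> S y -> S (x - y) by move=> Sx Sy; rewrite -scaleN1r; auto.
pose E s := e s - \sum_(j < N) d s j *: e j; rewrite -/(E t).
elim/ltn_ind: t => t IH; case: (ltnP t N) => [ltN | leNt].
  rewrite /E (bigD1 (Ordinal ltN)) //= d_init // eqxx scale1r.
  rewrite big1 ?addr0 ?subrr //.
  move=> j neq_jt; rewrite d_init // (_ : (t == j) = false) ?scale0r //.
  by apply: contraNF neq_jt => /eqP eq_tj; apply/eqP/val_inj.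
have E_rec :
    \sum_(i < N.+1) a i *: E (t - i)%N = \sum_(i < N.+1) a i *: e (t - i)%N.
  rewrite /E; under eq_bigr do rewrite scalerBr scaler_sumr.
  rewrite sumrB exchange_big /= [X in _ - X]big1 ?subr0 // => j _.
  by under eq_bigr do rewrite scalerA; rewrite -scaler_suml d_rec // scale0r.
have -> : E t = \sum_(i < N.+1) a i *: E (t - i)%N
                - \sum_(i < N) a i.+1 *: E (t - i.+1)%N.
  by rewrite big_ord_recl /= a0 scale1r subn0 addrK.
apply: SB; first by rewrite E_rec; apply: e_rec.
apply: big_ind => [||i _]; [exact: S0 | exact: SD |].
by apply/SZ/IH; have := ltn_ord i; lia.
Qed.

End RecurrenceModulo.

Section CircSpan.
Variables (K : fieldType) (V : lmodType K) (Y : V -> int -> V -> V).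
Variables (om : V) (n : nat).

Lemma inO0 : inO Y om n 0.
Proof. by exists [::]; rewrite big_nil. Qed.

Lemma inOD x y : inO Y om n x -> inO Y om n y -> inO Y om n (x + y).
Proof.
move=> [s1 [circ1 ->]] [s2 [circ2 ->]]; exists (s1 ++ s2); rewrite big_cat.
by split=> // t; rewrite mem_cat => /orP[/circ1 | /circ2].
Qed.

Lemma inOZ (k : K) x : inO Y om n x -> inO Y om n (k *: x).
Proof.
move=> [s [circ_s ->]]; exists [seq (k * t.1, t.2) | t <- s]; split.
  by move=> _ /mapP[t /circ_s circ_t ->].
by rewrite big_map scaler_sumr; apply: eq_bigr => t _; rewrite scalerA.
Qed.

Lemma inOB x y : inO Y om n x -> inO Y om n y -> inO Y om n (x - y).
Proof. by move=> Ox Oy; rewrite -scaleN1r; apply/inOD/inOZ. Qed.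

Lemma inO_circ y : is_circ Y om n y -> inO Y om n y.
Proof.
move=> circ_y; exists [:: (1, y)]; rewrite big_seq1 scale1r.
by split=> // t; rewrite inE => /eqP ->.
Qed.

Lemma simO_refl x : simO Y om n x x.
Proof. by rewrite /simO subrr; exact: inO0. Qed.

End CircSpan.

Section BinomialModes.
Variables (K : fieldType) (V : lmodType K) (Y : V -> int -> V -> V).
Variables (vac om : V) (c : K).
Hypotheses (charK : [pchar K] =i pred0) (HV : isVOA Y vac om c).
Variables (n : nat) (v : V).

Lemma YZr (a : V) (k : int) (x : K) (b : V) : Y a k (x *: b) = x *: Y a k b.
Proof.
have Y0 : Y a k 0 = 0.
  by have := Y_linr HV k a 0 0 (-1); rewrite scaler0 addr0 scaleN1r addNr.
by have := Y_linr HV k a b 0 x; rewrite !addr0 Y0 addr0.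
Qed.

Lemma Lm1_weight (a : V) (wa : int) : Lop Y om 0 a = wa%:~R *: a ->
  Lop Y om 0 (Lop Y om (-1) a) = (wa + 1)%:~R *: Lop Y om (-1) a.
Proof.
move=> wt_a; have := virasoro HV 0 (-1) a.
rewrite wt_a [Lop _ _ (-1) (_ *: _)]/Lop YZr -/(Lop Y om (-1) a).
rewrite add0r opprK /= addr0 => /eqP.
by rewrite subr_eq => /eqP ->; rewrite intrD scalerDl addrC.
Qed.

Definition binom_modes (a : V) (M : nat) (s : int) (B : nat) : V :=
  \sum_(j < B) 'C(M, j)%:R *: Y a (j%:Z - s) v.

Lemma binom_modes_widen (a : V) (M : nat) (s : int) (B : nat) : (M < B)%N ->
  binom_modes a M s B = binom_modes a M s M.+1.
Proof.
move=> ltMB; rewrite /binom_modes.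
rewrite [RHS](big_ord_widen B (fun j => 'C(M, j)%:R *: Y a (j%:Z - s) v)) //.
rewrite [RHS]big_mkcond /=.
by apply: eq_bigr => j _; case: ltnP => // ltMj; rewrite bin_small ?scale0r.
Qed.

Lemma binom_modes_Lm1 (a : V) (M : nat) (s : int) :
  binom_modes (Lop Y om (-1) a) M.+1 s M.+2 =
  s%:~R *: binom_modes a M (s + 1) M.+1
  + (s - M.+1%:Z)%:~R *: binom_modes a M s M.+1.
Proof.
rewrite -(@binom_modes_widen a M (s + 1) M.+2) // /binom_modes.
rewrite big_ord_recl [X in _ = _ *: X + _]big_ord_recl scalerDr -addrA /=.
congr (_ + _).
  rewrite (L_minus1_deriv HV) !bin0 !scale1r sub0r rmorphN opprK.
  by congr (_ *: Y a _ v); lia.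
rewrite !scaler_sumr -big_split; apply: eq_bigr => j _ /=.
rewrite /bump /= add1n (L_minus1_deriv HV) !scalerA.
rewrite (_ : j.+1%:Z - s - 1 = j%:Z - s); last by lia.
rewrite (_ : j.+1%:Z - (s + 1) = j%:Z - s); last by lia.
rewrite -scalerDl; congr (_ *: _).
have bin_left : j.+1%:R * 'C(M, j.+1)%:R = (M%:R - j%:R) * 'C(M, j)%:R :> K.
  case: (leqP j M) => [leM | ltM].
    by rewrite -natrB // -!natrM mul_bin_left.
  by rewrite !bin_small ?mulr0 //; lia.
apply/eqP; rewrite -subr_eq0; apply/eqP.
transitivity ((M%:R - j%:R) * 'C(M, j)%:R - j.+1%:R * 'C(M, j.+1)%:R : K).
  by rewrite binS natrD !intrB -!pmulrn; ring.
by rewrite bin_left subrr.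
Qed.

Lemma binom_modes_inO (m : nat) (a : V) (wa : int) (M : nat) :
  Lop Y om 0 a = wa%:~R *: a -> wa + n%:Z = M%:Z ->
  inO Y om n (binom_modes a M (2 * n%:Z + 2 + m%:Z) M.+1).
Proof.
elim: m a wa M => [|m IH] a wa M wt_a wt_aM.
  apply: inO_circ; exists a, wa, v; split => //; exists M.+1 => B ltMB.
  rewrite -(binom_modes_widen _ _ ltMB) /binom_modes; apply: eq_bigr => j _.
  by rewrite wt_aM binom_nat //; congr (_ *: Y a _ v); lia.
set s := 2 * n%:Z + 2 + m%:Z.
have s_neq0 : s%:~R != 0 :> K.
  by rewrite (_ : s = (2 * n + 2 + m)%N) ?char0_natf_neq0 //; lia.
rewrite (_ : 2 * n%:Z + 2 + m.+1%:Z = s + 1); last by lia.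
have -> : binom_modes a M (s + 1) M.+1 = s%:~R^-1 *:
    (binom_modes (Lop Y om (-1) a) M.+1 s M.+2
     - (s - M.+1%:Z)%:~R *: binom_modes a M s M.+1).
  by rewrite binom_modes_Lm1 addrK scalerA mulVf // scale1r.
apply/inOZ/inOB; last by apply/inOZ/(IH a wa).
by apply: (IH _ (wa + 1)); [exact: Lm1_weight | lia].
Qed.

End BinomialModes.

Section LowModes.
Variables (K : fieldType) (V : lmodType K) (Y : V -> int -> V -> V).
Variables (vac om : V) (c : K).
Hypotheses (charK : [pchar K] =i pred0) (HV : isVOA Y vac om c).
Variables (n N : nat) (u v : V) (w : int).
Hypotheses (wt_u : Lop Y om 0 u = w%:~R *: u) (wt_uN : w + n%:Z = N%:Z).

Lemma low_modes_rec (t : nat) : (N <= t)%N ->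
  inO Y om n
    (\sum_(i < N.+1) 'C(N, i)%:R *: Y u (- (n%:Z - w + 2 + (t - i)%N%:Z)) v).
Proof.
move=> leNt; have := binom_modes_inO charK HV v (t - N) wt_u wt_uN.
congr (inO _ _ _ _); apply: eq_bigr => i _; congr (_ *: Y u _ v).
by have := ltn_ord i; lia.
Qed.

Lemma low_modes_simO (t : nat) :
  simO Y om n (Y u (- (n%:Z - w + 2 + t%:Z)) v)
    (\sum_(j < N) rec_coef K N t j *: Y u (- (n%:Z - w + 2 + j%:Z)) v).
Proof.
apply: (linear_recurrence_mod (inO0 Y om n) (@inOD _ _ Y om n) (@inOZ _ _ Y om n)
  (a := fun i => 'C(N, i)%:R) (d := rec_coef K N)
  (e := fun s => Y u (- (n%:Z - w + 2 + s%:Z)) v)).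
- by rewrite bin0.
- exact: rec_coef_init.
- exact: rec_coef_rec.
- exact: low_modes_rec.
Qed.

End LowModes.

Section RightHandSide.
Variables (K : fieldType) (V : lmodType K) (Y : V -> int -> V -> V).
Variables (n : nat) (u v : V) (w : int) (p : nat).

Lemma rhs_coeff_head :
  p%:Z + w <= n%:Z -> rhs_coeff Y n u w v p = Y u (- (p%:Z + 1)) v.
Proof.
move=> le_pwn; rewrite /rhs_coeff ifT; last by apply/andP; split; lia.
by rewrite ifF ?addr0 //; apply/negbTE; rewrite -ltNge; lia.
Qed.

Lemma sign_parity (a b x y : nat) :
  (a + 2 * x = b + 2 * y)%N -> (-1) ^+ a = (-1) ^+ b :> K.
Proof.
move=> /(congr1 odd); rewrite !oddD /= !addbF !addbb !addbF => odd_ab.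
by rewrite -signr_odd odd_ab signr_odd.
Qed.

Lemma rhs_coeff_tail (N t : nat) : w + n%:Z = N%:Z -> (0 < N)%N ->
  p%:Z + w = n%:Z + 1 + t%:Z ->
  rhs_coeff Y n u w v p =
    \sum_(j < N) rec_coef K N t j *: Y u (- (n%:Z - w + 2 + j%:Z)) v.
Proof.
move=> wt_uN N_gt0 ptE; rewrite /rhs_coeff ifF; last by apply/negbTE; lia.
rewrite add0r ifT; last by lia.
rewrite /sumz ifT; last by lia.
rewrite (_ : absz (2 * n%:Z + 1 - (n%:Z - w + 2) + 1) = N); last by lia.
apply: eq_bigr => j _; congr (_ *: Y u _ v).
have ltjN := ltn_ord j.
rewrite /rec_coef (_ : p%:Z + w - w = p); last by lia.
rewrite (_ : p%:Z + w - n%:Z - 1 = t); last by lia.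
rewrite (_ : n%:Z - w + 2 + j%:Z - n%:Z + w - 2 = j); last by lia.
rewrite (_ : p%:Z + w - (n%:Z - w + 2 + j%:Z) - w = t%:Z - j%:Z - 1); last by lia.
rewrite (_ : 2 * n%:Z - (n%:Z - w + 2 + j%:Z) + 1 = (N.-1 - j)%N); last by lia.
rewrite -exprnP (@sign_parity p (N.-1 + t) N.-1 n) //; lia.
Qed.

End RightHandSide.

Theorem lemma3p3 (K : fieldType) (V : lmodType K) (Y : V -> int -> V -> V)
    (vac om : V) (c : K) (HK : [pchar K] =i pred0)
    (HV : isVOA Y vac om c) (n : nat) (u v : V) (w : int)
    (hu : Lop Y om 0 u = w%:~R *: u) :
  (- n%:Z < w ->
     forall p : nat,
       simO Y om n (Y u (- (p%:Z + 1)) v) (rhs_coeff Y n u w v p)) /\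
  (w = - n%:Z ->
     forall p : nat,
       simO Y om n (Y u (- (p%:Z + 1)) v)
         (if (p <= 2 * n)%N then Y u (- (p%:Z + 1)) v else 0)).
Proof.
split=> [lt_nw p | wE p].
  have [N wt_uN] : exists N : nat, w + n%:Z = N%:Z.
    by exists (absz (w + n%:Z)%R); rewrite gez0_abs //; lia.
  case: (lerP (p%:Z + w) n%:Z) => [le_pwn | lt_npw].
    by rewrite rhs_coeff_head //; exact: simO_refl.
  have [t ptE] : exists t : nat, p%:Z + w = n%:Z + 1 + t%:Z.
    by exists (absz (p%:Z + w - n%:Z - 1)%R); rewrite gez0_abs //; lia.
  rewrite (rhs_coeff_tail Y u v wt_uN _ ptE); last by lia.
  rewrite (_ : p%:Z + 1 = n%:Z - w + 2 + t%:Z); last by lia.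
  exact (low_modes_simO HK HV v hu wt_uN t).
case: leqP => [le_p2n | lt_2np]; first exact: simO_refl.
have wt_u0 : w + n%:Z = 0%N%:Z by rewrite wE addNr.
have := low_modes_simO HK HV v hu wt_u0 (p - (2 * n).+1).
rewrite big_ord0; congr (simO _ _ _ (Y u _ v) _); lia.
Qed.
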